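(* $rx_3(K_{2,3})=rx_3(K_{2,4})=3$, and $rx_3(K_{2,t})\geq 4$ for every $t\geq 5$.
   Context: An edge coloring of a graph $G$ is any assignment of colors to the edges (adjacent edges may receive the same color). A tree $T$ in an edge-colored graph is a rainbow tree if no two edges of $T$ have the same color. For $S\subseteq V(G)$, an $S$-tree is a subtree of $G$ containing all vertices of $S$. A $3$-rainbow coloring of $G$ is an edge coloring such that for every set $S$ of $3$ vertices of $G$ there is a rainbow $S$-tree in $G$. The $3$-rainbow index $rx_3(G)$ is the minimum number of colors in a $3$-rainbow coloring of $G$. $K_{2,t}$ denotes the complete bipartite graph with parts of sizes $2$ and $t$. *)

From mathcomp Require Import all_boot.
Set Implicit Arguments. Unset Strict Implicit. Unset Printing Implicit Defensive.

(* A simple graph on a finite vertex type V is given by a symmetric,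
   irreflexive adjacency relation adj.  Edges are 2-element vertex sets. *)
Section Rainbow.
Variables (V : finType) (adj : rel V).

Definition edges : {set {set V}} :=
  [set e : {set V} | [exists x, exists y, adj x y && (e == [set x; y])]].

Definition vset (F : {set {set V}}) : {set V} := \bigcup_(e in F) e.

Definition frel (F : {set {set V}}) : rel V := fun a b => [set a; b] \in F.

Definition is_tree (F : {set {set V}}) : Prop :=
  [/\ F \subset edges,
      (forall x y, x \in vset F -> y \in vset F -> connect (frel F) x y)
    & ~ (exists p : seq V, [/\ uniq p, 2 < size p & cycle (frel F) p])].

(* An edge coloring is any map from edges to colors (values off edges are
   irrelevant). *)
Definition ncolors (c : {set V} -> nat) : nat :=
  size (undup [seq c e | e <- enum edges]).

Definition rainbow_tree (c : {set V} -> nat) (F : {set {set V}}) : Prop :=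
  {in F &, injective c}.

Definition three_rainbow (c : {set V} -> nat) : Prop :=
  forall S : {set V}, #|S| = 3 ->
    exists F : {set {set V}}, [/\ is_tree F, S \subset vset F & rainbow_tree c F].

Definition is_rx3 (k : nat) : Prop :=
  (exists c, three_rainbow c /\ ncolors c = k) /\
  (forall c, three_rainbow c -> k <= ncolors c).

End Rainbow.

Definition Kbip (m n : nat) : rel ('I_m + 'I_n)%type :=
  fun x y => match x, y with
             | inl _, inr _ | inr _, inl _ => true
             | _, _ => false
             end.
Arguments Kbip : clear implicits.

From Pilot Require Import Defs.
From mathcomp Require Import all_boot.
Set Implicit Arguments. Unset Strict Implicit. Unset Printing Implicit Defensive.

(* The vertices of K_{2,t} are the left vertices inl a (a : 'I_2) and the
   right vertices inr j; every edge is ed a j = {inl a, inr j}, so a coloring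
   is essentially a 2 x t matrix of colors.

   - General trees: a connected edge set with at most two branching vertices
     is a tree; in particular stars and paths with three edges are trees.
   - Lower bounds: a tree containing three right vertices has an edge at each
     of them, and these are distinct, so 3 colors are needed.  With only 3
     colors the rainbow tree consists of exactly these three edges, and
     connectivity forces them to share their left end: some row of the color
     matrix is rainbow on any three columns.  For t >= 5 this fails: two
     words of length 5 over three letters always miss a common triple of
     positions (a finite check).
   - Upper bounds: a criterion on the color matrix, built from stars and
     three-edge paths, for the induced coloring to be 3-rainbow, checked on
     explicit 3-colorings of K_{2,3} and K_{2,4}. *)

Definition distinct3 (T : eqType) (x y z : T) := [&& x != y, x != z & y != z].

Lemma card_set3 (T : finType) (x y z : T) : distinct3 x y z -> #|[set x; y; z]| = 3.
Proof.
case/and3P => Nxy Nxz Nyz.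
by rewrite setUC cardsU1 cards2 !inE Nxy eq_sym (negbTE Nxz) eq_sym (negbTE Nyz).
Qed.

Lemma card3P (T : finType) (S : {set T}) : #|S| = 3 ->
  exists x y z, distinct3 x y z /\ S = [set x; y; z].
Proof.
move=> S3; have /set0Pn [x Sx] : S != set0 by rewrite -card_gt0 S3.
have /cards2P [y [z [Nyz Exyz]]] : #|S :\ x| == 2.
  by move: S3; rewrite (cardsD1 x) Sx add1n => [[->]].
have := set21 y z; have := set22 y z; rewrite -Exyz !in_setD1.
case/andP=> Nzx _ /andP [Nyx _]; exists x, y, z; split.
  by rewrite /distinct3 Nyz !(eq_sym x) Nyx Nzx.
by rewrite -{1}(setD1K Sx) Exyz setUA.
Qed.

Lemma set3_swap12 (T : finType) (x y z : T) : [set x; y; z] = [set y; x; z].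
Proof. by apply/setP => v; rewrite !inE (orbC (v == x)). Qed.

Lemma set3_swap23 (T : finType) (x y z : T) : [set x; y; z] = [set x; z; y].
Proof. by apply/setP => v; rewrite !inE -!orbA (orbC (v == y)). Qed.

Section Trees.
Variables (T : finType) (adj : rel T).

Lemma frel_sym (F : {set {set T}}) : symmetric (Defs.frel F).
Proof. by move=> x y; rewrite /Defs.frel setUC. Qed.

Lemma doubleton_eq (a b c d : T) : [set a; b] = [set c; d] ->
  (a = c /\ b = d) \/ (a = d /\ b = c).
Proof.
move=> E.
have Ha : a \in [set c; d] by rewrite -E set21.
have Hb : b \in [set c; d] by rewrite -E set22.
have Hc : c \in [set a; b] by rewrite E set21.
have Hd : d \in [set a; b] by rewrite E set22.
move: Ha Hb Hc Hd; rewrite !in_set2.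
by do 4! (case/orP => /eqP ?); subst; auto.
Qed.

Definition branching (F : {set {set T}}) (v : T) :=
  exists u w, [/\ u != w, Defs.frel F v u & Defs.frel F v w].

(* Every vertex of a cycle of length at least 3 is branching, so an edge set
   with at most two branching vertices has no such cycle. *)
Lemma no_cycle_of_two_branching (F : {set {set T}}) d1 d2 :
  (forall v, branching F v -> v = d1 \/ v = d2) ->
  ~ (exists p : seq T, [/\ uniq p, 2 < size p & cycle (Defs.frel F) p]).
Proof.
move=> H [[|a [|b [|c r]]] [Hu _ Hc]] //.
move: Hc; rewrite /= rcons_path /= => /and3P [Hab Hbc /andP [Hp Hl]].
have Hch : Defs.frel F c (head a r).
  by case: r Hu Hp Hl => [|d r] //= _ /andP [].
move: Hu; rewrite /= !inE !negb_or => /and3P [/and3P [Nab Nac _] /andP [Nbc Nbr] _].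
have Ba : branching F a.
  exists b, (last c r); split => //; last by rewrite frel_sym.
  apply/eqP => Eb; have := mem_last c r; rewrite -Eb inE (negbTE Nbr) orbF.
  by move/eqP => E; rewrite E eqxx in Nbc.
have Bb : branching F b by exists a, c; split => //; rewrite frel_sym.
have Bc : branching F c.
  exists b, (head a r); split => //; last by rewrite frel_sym.
  case: r Hch Nbr {Hl Hp Ba} => [|d r] /= _; first by rewrite eq_sym.
  by rewrite inE negb_or => /andP [].
case: (H _ Ba) => ?; case: (H _ Bb) => ?; case: (H _ Bc) => ?; subst;
  by rewrite ?eqxx in Nab Nac Nbc.
Qed.

Lemma vsetP (F : {set {set T}}) x :
  reflect (exists2 e, e \in F & x \in e) (x \in vset F).
Proof. exact: bigcupP. Qed.

Lemma tree_of_root (F : {set {set T}}) z d1 d2 : F \subset edges adj ->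
  (forall x, x \in vset F -> connect (Defs.frel F) x z) ->
  (forall v, branching F v -> v = d1 \/ v = d2) -> is_tree adj F.
Proof.
move=> HE Hc Hb; split => //; last exact: no_cycle_of_two_branching Hb.
move=> x y Hx Hy; apply: connect_trans (Hc _ Hx) _.
rewrite (sym_connect_sym (@frel_sym F)); exact: Hc.
Qed.

Definition star (z : T) (L : {set T}) : {set {set T}} := [set [set z; w] | w in L].

Lemma star_tree z (L : {set T}) :
  (forall w, w \in L -> adj z w) -> is_tree adj (star z L).
Proof.
move=> HL; apply: (@tree_of_root _ z z z).
- apply/subsetP => e /imsetP [w Hw ->]; rewrite /edges inE.
  by apply/existsP; exists z; apply/existsP; exists w; rewrite HL ?eqxx.
- move=> x /vsetP [e /imsetP [w Hw ->]] /set2P [] ->; first exact: connect0.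
  by apply: connect1; rewrite /Defs.frel setUC; apply/imsetP; exists w.
- move=> v [u [w [Nuw Hu Hw]]]; left; apply/eqP/negP => Nvz.
  move: Hu Hw => /imsetP [u' _ /doubleton_eq Eu] /imsetP [w' _ /doubleton_eq Ew].
  case: Eu => [[Ev _]|[_ Eu]]; first by rewrite Ev eqxx in Nvz.
  case: Ew => [[Ev _]|[_ Ew]]; first by rewrite Ev eqxx in Nvz.
  by rewrite Eu Ew eqxx in Nuw.
Qed.

Lemma star_vset z (L : {set T}) : L != set0 -> z |: L \subset vset (star z L).
Proof.
case/set0Pn => w Hw; apply/subsetP => x; rewrite in_setU1 => /orP [/eqP ->|Hx].
  by apply/vsetP; exists [set z; w]; [apply/imsetP; exists w|rewrite set21].
by apply/vsetP; exists [set z; x]; [apply/imsetP; exists x|rewrite set22].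
Qed.

Lemma star_rainbow (c : {set T} -> nat) z (L : {set T}) :
  {in L &, injective (fun w => c [set z; w])} -> rainbow_tree c (star z L).
Proof.
by move=> H e e' /imsetP [w Hw ->] /imsetP [w' Hw' ->] /(H _ _ Hw Hw') ->.
Qed.

Section Path.
Variables a b c d : T.

Definition path3 : {set {set T}} := [set [set a; b]; [set b; c]; [set c; d]].

Lemma path3_neighbour v u : Defs.frel path3 v u -> v != b -> v != c ->
  (v = a /\ u = b) \/ (v = d /\ u = c).
Proof.
rewrite /Defs.frel /path3 !inE => /orP [/orP []|] /eqP /doubleton_eq;
  by move=> [] [-> ->] Nb Nc; rewrite ?eqxx in Nb Nc; auto.
Qed.

Lemma path3_tree : adj a b -> adj b c -> adj c d -> a != d -> is_tree adj path3.
Proof.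
move=> Hab Hbc Hcd Nad.
have back x y : [set x; y] \in path3 -> Defs.frel path3 y x.
  by rewrite /Defs.frel setUC.
apply: (@tree_of_root _ b b c).
- apply/subsetP => e; rewrite /path3 !inE => /orP [/orP []|] /eqP ->;
  apply/existsP; [exists a|exists b|exists c]; apply/existsP;
  [exists b|exists c|exists d]; by rewrite eqxx andbT.
- have Ca : connect (Defs.frel path3) a b.
    by apply: connect1; rewrite /Defs.frel !inE eqxx.
  have Cc : connect (Defs.frel path3) c b.
    by apply: connect1; apply: back; rewrite !inE eqxx orbT.
  have Cd : connect (Defs.frel path3) d b.
    apply: connect_trans Cc; apply: connect1; apply: back.
    by rewrite !inE eqxx !orbT.
  move=> x /vsetP [e]; rewrite /path3 !inE.
  by move=> /orP [/orP []|] /eqP -> /set2P [] ->.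
- move=> v [u [w [Nuw Hu Hw]]].
  have [->|Nvb] := eqVneq v b; first by left.
  have [->|Nvc] := eqVneq v c; first by right.
  move: (path3_neighbour Hu Nvb Nvc) (path3_neighbour Hw Nvb Nvc).
  move=> [] [Ev1 E1] [] [Ev2 E2]; try by rewrite E1 E2 eqxx in Nuw.
  all: by move: Nad; rewrite -Ev1 -Ev2 eqxx.
Qed.

Lemma path3_vset : [set a; b; c; d] \subset vset path3.
Proof.
apply/subsetP => x; rewrite !inE => /orP [/orP [/orP []|]|] /eqP ->; apply/vsetP.
- by exists [set a; b]; rewrite !inE ?eqxx.
- by exists [set a; b]; rewrite !inE ?eqxx ?orbT.
- by exists [set b; c]; rewrite !inE ?eqxx ?orbT.
- by exists [set c; d]; rewrite !inE ?eqxx ?orbT.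
Qed.

Lemma path3_rainbow (col : {set T} -> nat) :
  distinct3 (col [set a; b]) (col [set b; c]) (col [set c; d]) ->
  rainbow_tree col path3.
Proof.
case/and3P => N1 N2 N3 e e'.
rewrite /path3 !inE => /orP [/orP []|] /eqP -> /orP [/orP []|] /eqP -> E //;
  by rewrite E eqxx in N1 N2 N3.
Qed.
End Path.
End Trees.

Section CompleteBipartite.
Variable t : nat.
Local Notation V := ('I_2 + 'I_t)%type.
Local Notation G := (Kbip 2 t).

Definition ed (a : 'I_2) (j : 'I_t) : {set V} := [set inl a; inr j].

Lemma edgesP e : reflect (exists a j, e = ed a j) (e \in edges G).
Proof.
rewrite inE; apply: (iffP existsP) => [|[a [j ->]]].
  case=> x /existsP [y /andP [Hxy /eqP ->]].
  case: x y Hxy => [a|j] [b|k] //= _; first by exists a, k.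
  by exists b, j; rewrite /ed setUC.
by exists (inl a); apply/existsP; exists (inr j); rewrite /ed eqxx.
Qed.

Lemma ed_edge a j : ed a j \in edges G.
Proof. by apply/edgesP; exists a, j. Qed.

Lemma in_edl a j (a' : 'I_2) : (inl a' \in ed a j) = (a' == a).
Proof. by rewrite !inE /= orbF. Qed.

Lemma in_edr a j (j' : 'I_t) : (inr j' \in ed a j) = (j' == j).
Proof. by rewrite !inE. Qed.

Lemma ed_inj a j a' j' : ed a j = ed a' j' -> a = a' /\ j = j'.
Proof.
move=> E; have Ha : inl a \in ed a' j' by rewrite -E in_edl.
have Hj : inr j \in ed a' j' by rewrite -E in_edr.
by move: Ha Hj; rewrite in_edl in_edr => /eqP -> /eqP ->.
Qed.

Lemma card_right3 (i j k : 'I_t) :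
  distinct3 i j k -> #|[set inr i; inr j; inr k] : {set V}| = 3.
Proof. by move=> D; apply: card_set3. Qed.

Lemma card_ed3 ai aj ak i j k :
  distinct3 i j k -> #|[set ed ai i; ed aj j; ed ak k]| = 3.
Proof.
have N a b p q : p != q -> ed a p != ed b q.
  by move=> Npq; apply: contra_neq Npq => /ed_inj [].
by case/and3P => Nij Nik Njk; apply: card_set3; rewrite /distinct3 !N.
Qed.

Lemma edge_at_right (F : {set {set V}}) j : F \subset edges G ->
  inr j \in vset F -> exists a, ed a j \in F.
Proof.
move=> /subsetP HF /vsetP [e He Hj]; have /edgesP [a [j' Ee]] := HF _ He.
by exists a; move: Hj; rewrite Ee in_edr => /eqP E; rewrite E -Ee.
Qed.

Lemma edges_at_right3 (F : {set {set V}}) i j k : F \subset edges G ->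
  [set inr i; inr j; inr k] \subset vset F ->
  exists ai aj ak, [set ed ai i; ed aj j; ed ak k] \subset F.
Proof.
move=> HE /subsetP HS.
have [ai Hi] : exists a, ed a i \in F.
  by apply: edge_at_right HE (HS _ _); rewrite !inE eqxx.
have [aj Hj] : exists a, ed a j \in F.
  by apply: edge_at_right HE (HS _ _); rewrite !inE eqxx orbT.
have [ak Hk] : exists a, ed a k \in F.
  by apply: edge_at_right HE (HS _ _); rewrite !inE eqxx !orbT.
by exists ai, aj, ak; apply/subsetP => e; rewrite !inE => /orP [/orP []|] /eqP ->.
Qed.

Lemma rainbow_card (c : {set V} -> nat) (F : {set {set V}}) :
  F \subset edges G -> rainbow_tree c F -> #|F| <= ncolors G c.
Proof.
move=> /subsetP HF Hr; rewrite cardE -(size_map c) /ncolors.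
apply: uniq_leq_size.
  by rewrite map_inj_in_uniq ?enum_uniq // => e e'; rewrite !mem_enum; apply: Hr.
move=> x /mapP [e He ->]; rewrite mem_undup; apply: map_f.
by rewrite mem_enum HF // -mem_enum.
Qed.

Lemma isolated_edge (F : {set {set V}}) a i y :
  (forall e, e \in F -> e != ed a i -> (inl a \notin e) && (inr i \notin e)) ->
  connect (Defs.frel F) (inr i) y -> y \in ed a i.
Proof.
move=> H Hc; have Hcl : closed (Defs.frel F) (ed a i).
  apply: (intro_closed (sym_connect_sym (@frel_sym _ F))) => x z Hxz Hx.
  have [E|N] := eqVneq [set x; z] (ed a i); first by rewrite -E set22.
  have /andP [Na Ni] := H _ Hxz N.
  by move: Hx Na Ni; rewrite /ed => /set2P [] <-; rewrite set21.
by rewrite -(closed_connect Hcl Hc) in_edr.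
Qed.

Lemma shared_left_end (F : {set {set V}}) ai aj ak i j k :
  F \subset [set ed ai i; ed aj j; ed ak k] -> i != j -> i != k ->
  connect (Defs.frel F) (inr i) (inr j) -> ai = aj \/ ai = ak.
Proof.
move=> /subsetP HF Nij Nik Cij.
have [->|Naj] := eqVneq ai aj; first by left.
have [->|Nak] := eqVneq ai ak; first by right.
case/negP: (Nij); rewrite eq_sym -(in_edr ai).
apply: isolated_edge Cij => e /HF; rewrite !inE => /orP [/orP []|] /eqP -> Ne.
- by rewrite eqxx in Ne.
- by rewrite in_edl in_edr Naj Nij.
- by rewrite in_edl in_edr Nak Nik.
Qed.

(* The key step of the lower bound: with at most three colors, the rainbow
   tree for three right vertices consists of exactly three edges, which by
   connectivity share their left end a; so row a of the coloring is rainbow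
   on these vertices. *)
Lemma rainbow_row (c : {set V} -> nat) :
  ncolors G c <= 3 -> three_rainbow G c ->
  forall i j k : 'I_t, distinct3 i j k ->
  exists a, distinct3 (c (ed a i)) (c (ed a j)) (c (ed a k)).
Proof.
move=> Hn Hc i j k Dijk; have /and3P [Nij Nik Njk] := Dijk.
have [F [[HE Hconn _] HS Hr]] := Hc _ (card_right3 Dijk).
have [ai [aj [ak Hsub]]] := edges_at_right3 HE HS.
have EF : F = [set ed ai i; ed aj j; ed ak k].
  apply/eqP; rewrite eq_sym eqEcard Hsub card_ed3 //.
  exact: leq_trans (rainbow_card HE Hr) Hn.
have [Vi Vj Vk] : [/\ inr i \in vset F, inr j \in vset F & inr k \in vset F].
  by split; apply: (subsetP HS); rewrite !inE eqxx ?orbT.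
have Li := @shared_left_end F ai aj ak i j k.
have Lj := @shared_left_end F aj ai ak j i k.
have Lk := @shared_left_end F ak ai aj k i j.
rewrite -EF in Li; rewrite -set3_swap12 -EF in Lj.
rewrite set3_swap12 set3_swap23 -EF in Lk.
have [Nji Nki Nkj] : [/\ j != i, k != i & k != j] by split; rewrite eq_sym.
have [Eji Eki] : aj = ai /\ ak = ai.
  move: (Li (subxx _) Nij Nik (Hconn _ _ Vi Vj)).
  move: (Lj (subxx _) Nji Njk (Hconn _ _ Vj Vi)).
  move: (Lk (subxx _) Nki Nkj (Hconn _ _ Vk Vi)).
  by do 3!case=> ?; subst; split.
have inF p : p \in [:: i; j; k] -> ed ai p \in F.
  by rewrite EF Eji Eki !inE => /or3P [] /eqP ->; rewrite eqxx ?orbT.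
have Ncol p q : p \in [:: i; j; k] -> q \in [:: i; j; k] -> p != q ->
    c (ed ai p) != c (ed ai q).
  move=> Hp Hq; apply: contra_neq => /(Hr _ _ (inF _ Hp) (inF _ Hq)).
  by case/ed_inj.
by exists ai; rewrite /distinct3 !Ncol // !inE eqxx ?orbT.
Qed.
End CompleteBipartite.

Lemma inord_distinct3 n p q r : p < q -> q < r -> r < n.+1 ->
  distinct3 (inord p : 'I_n.+1) (inord q) (inord r).
Proof.
move=> pq qr rn; have qn := ltn_trans qr rn.
have N x y : x < y -> y < n.+1 -> (inord x : 'I_n.+1) != inord y.
  move=> xy yn; apply/eqP => /(congr1 (@nat_of_ord _)).
  by rewrite !inordK ?(ltn_trans xy) // => E; rewrite E ltnn in xy.
by rewrite /distinct3 !N // (ltn_trans pq).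
Qed.

(* rx_3(K_{2,t}) >= 3 once t >= 3: the tree for three right vertices has an
   edge at each of them, and these edges must get distinct colors. *)
Lemma rx3_ge3 t : 3 <= t -> forall c : {set ('I_2 + 'I_t)%type} -> nat,
  three_rainbow (Kbip 2 t) c -> 3 <= ncolors (Kbip 2 t) c.
Proof.
case: t => [//|t] Ht c Hc.
have D : distinct3 (inord 0 : 'I_t.+1) (inord 1) (inord 2).
  exact: inord_distinct3.
have [F [[HE _ _] HS Hr]] := Hc _ (card_right3 D).
have [ai [aj [ak Hsub]]] := edges_at_right3 HE HS.
rewrite -(card_ed3 ai aj ak D).
exact: leq_trans (subset_leq_card Hsub) (rainbow_card HE Hr).
Qed.

Fixpoint words3 n : seq (seq nat) :=
  if n is n'.+1 then [seq x :: s | x <- iota 0 3, s <- words3 n'] else [:: [::]].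

Lemma words3P s : all (fun x => x < 3) s -> s \in words3 (size s).
Proof.
elim: s => [//|x s IH] /andP [Hx Hs].
by apply/allpairsPdep; exists x, s; rewrite mem_iota IH.
Qed.

Definition triples5 : seq (nat * nat * nat) :=
  [:: (0,1,2); (0,1,3); (0,1,4); (0,2,3); (0,2,4); (0,3,4); (1,2,3); (1,2,4);
      (1,3,4); (2,3,4)].

Definition rainbow_at (s : seq nat) (tr : nat * nat * nat) : bool :=
  distinct3 (nth 0 s tr.1.1) (nth 0 s tr.1.2) (nth 0 s tr.2).

(* For any two words of length 5 over a 3-letter alphabet, some triple of
   positions is rainbow in neither.  (A word with letter multiplicities
   m1 + m2 + m3 = 5 is rainbow on m1 m2 m3 <= 4 of the 10 triples.)  This is
   checked by exhaustive computation. *)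
Lemma two_words_miss_triple :
  all (fun f => all (fun g =>
    has (fun tr => ~~ rainbow_at f tr && ~~ rainbow_at g tr) triples5)
  (words3 5)) (words3 5).
Proof. by vm_compute. Qed.

(* The same fact for two sequences u, v with values in a list C of at most
   three colors, obtained by encoding each color by its index in C. *)
Lemma two_rows_miss_triple (C : seq nat) (u v : nat -> nat) : size C <= 3 ->
  (forall n, u n \in C) -> (forall n, v n \in C) ->
  exists p q r, [/\ p < q, q < r, r < 5,
    ~~ distinct3 (u p) (u q) (u r) & ~~ distinct3 (v p) (v q) (v r)].
Proof.
move=> sC uC vC.
pose code (w : nat -> nat) := [seq index (w n) C | n <- iota 0 5].
have code_word w : (forall n, w n \in C) -> code w \in words3 5.
  move=> wC; rewrite -(size_iota 0 5) -(size_map (fun n => index (w n) C)).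
  apply: words3P; apply/allP => _ /mapP [n _ ->].
  by apply: leq_trans sC; rewrite index_mem.
have code_rainbow w p q r : (forall n, w n \in C) -> p < 5 -> q < 5 -> r < 5 ->
    rainbow_at (code w) (p, q, r) = distinct3 (w p) (w q) (w r).
  move=> wC p5 q5 r5; rewrite /rainbow_at /= !(nth_map 0) ?size_iota //.
  by rewrite !nth_iota // /distinct3 !(inj_in_eq (@index_inj _ 0 C)) ?wC.
have incr : all (fun tr => [&& tr.1.1 < tr.1.2, tr.1.2 < tr.2 & tr.2 < 5]) triples5.
  by [].
have /allP /(_ _ (code_word u uC)) /allP /(_ _ (code_word v vC)) :=
  two_words_miss_triple.
case/hasP => [[[p q] r] Htr /andP [Hu Hv]].
have /and3P [pq qr r5] := allP incr _ Htr.
have q5 := ltn_trans qr r5; have p5 := ltn_trans pq q5.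
by exists p, q, r; rewrite -!code_rainbow.
Qed.

Lemma ord2P (a : 'I_2) : a = ord0 \/ a = ord_max.
Proof. by case: a => [[|[|//]] ?]; [left|right]; apply: val_inj. Qed.

(* rx_3(K_{2,t}) >= 4 once t >= 5: with three colors both rows would have to
   be rainbow on a triple of columns among the first five. *)
Lemma rx3_ge4 t : 5 <= t -> forall c : {set ('I_2 + 'I_t)%type} -> nat,
  three_rainbow (Kbip 2 t) c -> 4 <= ncolors (Kbip 2 t) c.
Proof.
case: t => [//|t] Ht c Hc; rewrite ltnNge; apply/negP => Hn.
pose row (a : 'I_2) n := c (ed a (inord n)).
have rowC a n : row a n \in undup [seq c e | e <- enum (edges (Kbip 2 t.+1))].
  by rewrite mem_undup; apply: map_f; rewrite mem_enum ed_edge.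
have [p [q [r [pq qr r5 N0 N1]]]] :=
  two_rows_miss_triple Hn (rowC ord0) (rowC ord_max).
have [a Ha] := rainbow_row Hn Hc (inord_distinct3 pq qr (leq_trans r5 Ht)).
case: (ord2P a) Ha => ->; rewrite -/(row _ p) -/(row _ q) -/(row _ r).
  by rewrite (negbTE N0).
by rewrite (negbTE N1).
Qed.

Section ColorMatrix.
Variables (t : nat) (r : 'I_2 -> 'I_t -> nat).
Local Notation V := ('I_2 + 'I_t)%type.
Local Notation G := (Kbip 2 t).

(* The coloring of K_{2,t} induced by r; non-edges get the dummy color 0. *)
Definition matrix_coloring (e : {set V}) : nat :=
  if [pick p : 'I_2 * 'I_t | e == ed p.1 p.2] is Some p then r p.1 p.2 else 0.
Local Notation col := matrix_coloring.

Lemma matrix_coloringE a j : col (ed a j) = r a j.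
Proof.
rewrite /col; case: pickP => [[a' j'] /= /eqP /ed_inj [<- <-] //|/(_ (a, j))].
by rewrite eqxx.
Qed.

Lemma matrix_coloringE' a j : col [set inr j; inl a] = r a j.
Proof. by rewrite setUC matrix_coloringE. Qed.

Definition rainbow_spanned (S : {set V}) :=
  exists F, [/\ is_tree G F, S \subset vset F & rainbow_tree col F].

Lemma rainbow_spannedS (S S' : {set V}) :
  S' \subset S -> rainbow_spanned S -> rainbow_spanned S'.
Proof.
by move=> sS [F [HF HS Hr]]; exists F; split=> //; apply: subset_trans HS.
Qed.

Lemma left_star_spans a (B : {set 'I_t}) : {in B &, injective (r a)} ->
  B != set0 -> rainbow_spanned (inl a |: [set inr j | j in B]).
Proof.
move=> Hi /set0Pn [j0 Hj0]; exists (star (inl a) [set inr j | j in B]); split.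
- by apply: star_tree => _ /imsetP [j _ ->].
- by apply: star_vset; apply/set0Pn; exists (inr j0); apply: imset_f.
- apply: star_rainbow => _ _ /imsetP [j Hj ->] /imsetP [j' Hj' ->].
  by rewrite !matrix_coloringE => /(Hi _ _ Hj Hj') ->.
Qed.

Lemma rrr_spanned a (i j k : 'I_t) : distinct3 (r a i) (r a j) (r a k) ->
  rainbow_spanned [set inr i; inr j; inr k].
Proof.
case/and3P => N1 N2 N3.
apply: rainbow_spannedS (left_star_spans (a := a) (B := [set i; j; k]) _ _).
- apply/subsetP => x; rewrite !inE => /orP [/orP []|] /eqP ->;
    by rewrite imset_f ?orbT // !inE eqxx ?orbT.
- move=> x y; rewrite !inE.
  move=> /orP [/orP []|] /eqP -> /orP [/orP []|] /eqP -> E //;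
    by rewrite E eqxx in N1 N2 N3.
- by apply/set0Pn; exists i; rewrite !inE eqxx.
Qed.

(* One left and two right vertices: a star at the left vertex if its row
   separates the two columns, otherwise a path inr j - inl a' - inr i - inl a
   through the other left vertex. *)
Lemma lrr_spanned a (i j : 'I_t) : i != j ->
  (r a i != r a j \/ exists2 a', a' != a & distinct3 (r a' j) (r a' i) (r a i)) ->
  rainbow_spanned [set inl a; inr i; inr j].
Proof.
move=> Nij [N|[a' Na' D]].
  apply: rainbow_spannedS (left_star_spans (a := a) (B := [set i; j]) _ _).
  + apply/subsetP => x; rewrite !inE => /orP [/orP []|] /eqP ->;
      by rewrite ?eqxx // imset_f ?orbT // !inE eqxx ?orbT.
  + move=> x y; rewrite !inE => /orP [] /eqP -> /orP [] /eqP -> E //;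
      by rewrite E eqxx in N.
  + by apply/set0Pn; exists i; rewrite !inE eqxx.
exists (path3 (inr j) (inl a') (inr i) (inl a)); split.
- by apply: path3_tree.
- apply: subset_trans (path3_vset _ _ _ _).
  apply/subsetP => x; rewrite !inE.
  by move=> /orP [/orP []|] /eqP ->; rewrite eqxx ?orbT.
- by apply: path3_rainbow; rewrite !matrix_coloringE' matrix_coloringE.
Qed.

Lemma llr_spanned a b (j : 'I_t) : a != b -> r a j != r b j ->
  rainbow_spanned [set inl a; inl b; inr j].
Proof.
move=> Nab N; exists (star (inr j) [set inl a; inl b]); split.
- by apply: star_tree => w; rewrite !inE => /orP [] /eqP ->.
- apply: subset_trans (star_vset _ _); last first.
    by apply/set0Pn; exists (inl a); rewrite !inE eqxx.
  by apply/subsetP => x; rewrite !inE => /orP [/orP []|] ->; rewrite ?orbT.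
- apply: star_rainbow => w w'; rewrite !inE => /orP [] /eqP -> /orP [] /eqP ->;
    by rewrite !matrix_coloringE' // => E; rewrite E eqxx in N.
Qed.

Lemma matrix_three_rainbow :
  (forall i j k : 'I_t, distinct3 i j k ->
     exists a, distinct3 (r a i) (r a j) (r a k)) ->
  (forall a (i j : 'I_t), i != j -> r a i != r a j \/
     exists2 a', a' != a & distinct3 (r a' j) (r a' i) (r a i)) ->
  (forall a b j, a != b -> r a j != r b j) ->
  three_rainbow G col.
Proof.
move=> Hrrr Hlrr Hllr S /card3P [x [y [z [/and3P [Nxy Nxz Nyz] ->]]]].
case: x y z Nxy Nxz Nyz => [a|i] [b|j] [c|k] Nxy Nxz Nyz.
- by case: (ord2P a) (ord2P b) (ord2P c) Nxy Nxz Nyz => -> [] -> [] ->.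
- exact: llr_spanned (Hllr _ _ _ Nxy).
- by rewrite set3_swap23; apply: llr_spanned (Hllr _ _ _ Nxz).
- exact: lrr_spanned (Hlrr _ _ _ Nyz).
- by rewrite set3_swap12 set3_swap23; apply: llr_spanned (Hllr _ _ _ Nyz).
- by rewrite set3_swap12; apply: lrr_spanned (Hlrr _ _ _ Nxz).
- by rewrite set3_swap23 set3_swap12; apply: lrr_spanned (Hlrr _ _ _ Nxy).
- have Dijk : distinct3 i j k by apply/and3P.
  by have [a Ha] := Hrrr _ _ _ Dijk; apply: rrr_spanned Ha.
Qed.
End ColorMatrix.

Lemma ncolors_matrix t (r : 'I_2 -> 'I_t -> nat) (l : seq nat) : uniq l ->
  (forall a j, r a j \in l) -> (forall x, x \in l -> exists a j, r a j = x) ->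
  ncolors (Kbip 2 t) (matrix_coloring r) = size l.
Proof.
move=> Ul Hin Hout.
have E : l =i undup [seq matrix_coloring r e | e <- enum (edges (Kbip 2 t))].
  move=> x; rewrite mem_undup; apply/idP/mapP => [/Hout [a [j <-]]|[e]].
    by exists (ed a j); rewrite ?matrix_coloringE // mem_enum ed_edge.
  by rewrite mem_enum => /edgesP [a [j ->]] ->; rewrite matrix_coloringE.
by have /esym/eqP := uniq_size_uniq Ul E; rewrite undup_uniq.
Qed.

Definition r3 (a : 'I_2) (j : 'I_3) : nat :=
  nth 0 (nth [::] [:: [:: 0; 1; 2]; [:: 1; 2; 0]] a) j.
Definition r4 (a : 'I_2) (j : 'I_4) : nat :=
  nth 0 (nth [::] [:: [:: 0; 1; 2; 0]; [:: 1; 0; 0; 2]] a) j.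

Lemma r3_three_rainbow : three_rainbow (Kbip 2 3) (matrix_coloring r3).
Proof.
apply: matrix_three_rainbow.
- move=> [[|[|[|//]]] ?] [[|[|[|//]]] ?] [[|[|[|//]]] ?] //= _;
  solve [by exists ord0 | by exists ord_max].
- move=> [[|[|//]] ?] [[|[|[|//]]] ?] [[|[|[|//]]] ?] //= _;
  solve [by left | by right; exists ord0 | by right; exists ord_max].
- by move=> [[|[|//]] ?] [[|[|//]] ?] [[|[|[|//]]] ?].
Qed.

Lemma r4_three_rainbow : three_rainbow (Kbip 2 4) (matrix_coloring r4).
Proof.
apply: matrix_three_rainbow.
- move=> [[|[|[|[|//]]]] ?] [[|[|[|[|//]]]] ?] [[|[|[|[|//]]]] ?] //= _;
  solve [by exists ord0 | by exists ord_max].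
- move=> [[|[|//]] ?] [[|[|[|[|//]]]] ?] [[|[|[|[|//]]]] ?] //= _;
  solve [by left | by right; exists ord0 | by right; exists ord_max].
- by move=> [[|[|//]] ?] [[|[|//]] ?] [[|[|[|[|//]]]] ?].
Qed.

Lemma r3_ncolors : ncolors (Kbip 2 3) (matrix_coloring r3) = 3.
Proof.
apply: (ncolors_matrix (l := [:: 0; 1; 2])) => //.
- by move=> [[|[|//]] ?] [[|[|[|//]]] ?]; rewrite /r3 /= !inE.
- move=> x; rewrite !inE => /or3P [] /eqP ->; exists ord0.
  + by exists ord0.
  + by exists (Ordinal (isT : 1 < 3)).
  + by exists (Ordinal (isT : 2 < 3)).
Qed.

Lemma r4_ncolors : ncolors (Kbip 2 4) (matrix_coloring r4) = 3.
Proof.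
apply: (ncolors_matrix (l := [:: 0; 1; 2])) => //.
- by move=> [[|[|//]] ?] [[|[|[|[|//]]]] ?]; rewrite /r4 /= !inE.
- move=> x; rewrite !inE => /or3P [] /eqP ->; exists ord0.
  + by exists ord0.
  + by exists (Ordinal (isT : 1 < 4)).
  + by exists (Ordinal (isT : 2 < 4)).
Qed.

Theorem lemma3 :
  [/\ is_rx3 (Kbip 2 3) 3,
      is_rx3 (Kbip 2 4) 3 &
      forall t : nat, 5 <= t ->
        forall c : {set ('I_2 + 'I_t)%type} -> nat,
          three_rainbow (Kbip 2 t) c -> 4 <= ncolors (Kbip 2 t) c].
Proof.
split; last exact: rx3_ge4.
- split; last exact: rx3_ge3.
  exists (matrix_coloring r3).
  by split; [exact: r3_three_rainbow | exact: r3_ncolors].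
- split; last exact: rx3_ge3.
  exists (matrix_coloring r4).
  by split; [exact: r4_three_rainbow | exact: r4_ncolors].
Qed.
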